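(* Let $X$ be a compact metrizable abelian group, $T$ a continuous automorphism of $X$, and $Y\le X$ a closed subgroup with $TY=Y$ such that $T|_Y$ is ergodic with respect to the Haar measure of $Y$. Suppose that for some $x\in X$ and $n\in\mathbb{N}$ the coset $x+Y$ satisfies $T^n(x+Y)=x+Y$. Then there exists $x'\in x+Y$ with $T^nx'=x'$. *)

From HB Require Import structures.
From mathcomp Require Import all_boot all_order all_algebra.
From mathcomp Require Import all_classical all_reals all_analysis.
Set Implicit Arguments. Unset Strict Implicit. Unset Printing Implicit Defensive.
Import Order.TTheory GRing.Theory Num.Theory.
Local Open Scope classical_set_scope.
Local Open Scope ring_scope.

Definition metrizable (R : realType) (X : topologicalType) : Prop :=
  exists d : X -> X -> R,
    [/\ forall x y, 0 <= d x y,
        forall x y, d x y = 0 <-> x = y,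
        forall x y, d x y = d y x,
        forall x y z, d x z <= d x y + d y z
      & forall A : set X, open A <->
          (forall x, A x -> exists2 e : R, 0 < e & [set y | d x y < e] `<=` A)].

(* topologicalZmodType is not a pointedType; we point X at 0 via a copy zpt X
   (convertible to X) in order to form its Borel sigma-algebra. *)
Definition zpt (X : topologicalZmodType) : Type := X.
HB.instance Definition _ (X : topologicalZmodType) := Choice.on (zpt X).
HB.instance Definition _ (X : topologicalZmodType) :=
  isPointed.Build (zpt X) (0%R : X).
Notation borel X := (g_sigma_algebraType (@open X : set (set (zpt X)))).

Definition closed_subgroup (X : topologicalZmodType) (Y : set X) : Prop :=
  [/\ closed Y, Y 0 & forall a b, Y a -> Y b -> Y (a - b)].

Definition cont_automorphism (X : topologicalZmodType) (T : X -> X) : Prop :=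
  [/\ {morph T : a b / a + b}, bijective T & continuous T].

(* mu, a Borel measure on X, is the (normalized) Haar measure of the closed
   subgroup Y, viewed as a measure on X concentrated on Y: a probability
   measure on Y invariant under translations by elements of Y. *)
Definition haar_of (R : realType) (X : topologicalZmodType) (Y : set X)
  (mu : {measure set (borel X) -> \bar R}) : Prop :=
  [/\ mu Y = 1%E, mu (~` Y) = 0%E
    & forall (y : X) (A : set (borel X)), Y y -> measurable A ->
        mu [set a + y | a in A] = mu A].

Definition ergodic_on (R : realType) (X : topologicalZmodType) (Y : set X)
  (T : X -> X) (mu : {measure set (borel X) -> \bar R}) : Prop :=
  (forall A : set (borel X), measurable A -> A `<=` Y ->
      mu (T @^-1` A `&` Y) = mu A) /\
  (forall A : set (borel X), measurable A -> A `<=` Y ->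
      T @^-1` A `&` Y = A -> mu A = 0%E \/ mu A = 1%E).

From HB Require Import structures.
From mathcomp Require Import all_boot all_order all_algebra.
From mathcomp Require Import all_classical all_reals all_analysis.
From mathcomp Require Import lra.
Import Order.TTheory GRing.Theory Num.Theory.
Local Open Scope classical_set_scope.
Local Open Scope ring_scope.

(* Let S = T^n with n > 0 and phi = S - id.  As S maps x + Y onto itself,
   S x = x + y0 for some y0 in Y, and x + y is fixed by S iff phi y = - y0; so
   it suffices that phi maps Y onto Y.  Its image Z is a closed subgroup (a
   continuous image of the compact group Y) that T maps onto itself.  If some
   p in Y were outside Z, so would be every T^i p, and continuity yields open
   neighbourhoods A of p and V of 0 with T^i a - v outside Z for a in A, v in V
   and i < n.  The points a of Y having some T^i a (i < n) in the open set
   V + Z form a T-invariant set, because S a - a lies in Z; it contains 0 and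
   misses A.  Haar measure charges nonempty relatively open subsets of Y, so
   this invariant set has measure strictly between 0 and 1, contradicting
   ergodicity. *)

Definition subgroup {V : zmodType} (Y : set V) : Prop :=
  Y 0 /\ forall a b, Y a -> Y b -> Y (a - b).

Section Subgroup.
Context {V : zmodType} {Y : set V}.
Hypothesis Ysub : subgroup Y.

Lemma subgroupN {a} : Y a -> Y (- a).
Proof. by case: Ysub => Y0 YB Ya; rewrite -sub0r; apply: YB. Qed.

Lemma subgroupD {a b} : Y a -> Y b -> Y (a + b).
Proof. by move=> Ya /subgroupN Yb; rewrite -[b]opprK; case: Ysub => _; apply. Qed.

End Subgroup.

Lemma closed_subgroupW {X : topologicalZmodType} {Y : set X} :
  closed_subgroup Y -> subgroup Y.
Proof. by case. Qed.

Lemma morphD_morphB {V : zmodType} {f : V -> V} :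
  {morph f : a b / a + b} -> {morph f : a b / a - b}.
Proof. by move=> fD a b; apply: (addIr (f b)); rewrite -fD !subrK. Qed.

Lemma iter_morph {S : Type} {f : S -> S} {op : S -> S -> S} i :
  {morph f : a b / op a b} -> {morph iter i f : a b / op a b}.
Proof. by move=> fop; elim: i => [//|i IH] a b /=; rewrite IH fop. Qed.

Section AdditiveMap.
Context {V : zmodType} {f : V -> V}.
Hypothesis fB : {morph f : a b / a - b}.

Lemma morphB0 : f 0 = 0.
Proof. by have := fB 0 0; rewrite subrr => ->; rewrite subrr. Qed.

Lemma subr_id_morphB : {morph (fun a => f a - a) : a b / a - b}.
Proof. by move=> a b /=; rewrite fB !opprB addrACA [RHS]addrACA [- f b + _]addrC. Qed.

Lemma subgroup_image {Y : set V} : subgroup Y -> subgroup (f @` Y).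
Proof.
case=> Y0 YB; split; first by exists 0; rewrite ?morphB0.
by move=> _ _ [a Ya <-] [b Yb <-]; exists (a - b); rewrite ?fB //; apply: YB.
Qed.

End AdditiveMap.

Lemma continuous_subf (S : topologicalType) (X : topologicalZmodType)
  (f g : S -> X) : continuous f -> continuous g -> continuous (fun s => f s - g s).
Proof.
move=> cf cg s.
exact: (continuous_comp (cvg_pair (cf s) (cg s)) (@sub_continuous X _)).
Qed.

Lemma continuous_iter {S : topologicalType} {f : S -> S} :
  continuous f -> forall i, continuous (iter i f).
Proof.
move=> cf; elim => [|i IH] s /=; first exact: cvg_id.
exact: continuous_comp (IH s) (cf _).
Qed.

Lemma metrizable_hausdorff {R : realType} {X : topologicalType} :
  metrizable R X -> hausdorff_space X.
Proof.
case=> d [d0 dE dC dT dO]; rewrite open_hausdorff => x y xy.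
have dxy : 0 < d x y.
  by rewrite lt0r d0 andbT; apply/eqP => /dE exy; rewrite exy eqxx in xy.
pose r := d x y / 2; pose ball z := [set w | d z w < r].
have ball_open z : open (ball z).
  apply/dO => w zw; exists (r - d z w); first by rewrite subr_gt0.
  by move=> u /= wu; rewrite /ball /=; have := dT z w u; lra.
have ball_center z : ball z z.
  by rewrite /ball /= (iffRL (dE z z)) //; apply: divr_gt0.
exists (ball x, ball y); first by split; apply/mem_set/ball_center.
split; [exact: ball_open|exact: ball_open|].
apply/eqP; rewrite -subset0 => w [/= xw yw].
by have := dT x w y; rewrite (dC w y); move: xw yw; rewrite /ball /r /=; lra.
Qed.

Section TopologicalZmod.
Context {X : topologicalZmodType}.

Lemma image_addr_preimage (A : set X) z :
  [set a + z | a in A] = (fun b => b - z) @^-1` A.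
Proof.
apply/seteqP; split => [_ [a Aa <-]|b Abz]; first by rewrite /= addrK.
by exists (b - z); rewrite ?subrK.
Qed.

Lemma open_image_addr (A : set X) z : open A -> open [set a + z | a in A].
Proof.
rewrite image_addr_preimage; apply: (continuousP _).1.
exact: continuous_subf (fun a => cvg_id) (fun a => cvg_cst z).
Qed.

Lemma open_addr_image2 (V Z : set X) :
  open V -> open [set v + z | v in V & z in Z].
Proof.
move=> oV; have -> : [set v + z | v in V & z in Z] =
    \bigcup_(z in Z) [set v + z | v in V].
  apply/seteqP; split => [_ [v Vv [z Zz <-]]|_ [z Zz [v Vv <-]]].
    by exists z => //; exists v.
  by exists v => //; exists z.
by apply: bigcup_open => z _; exact: open_image_addr.
Qed.

Lemma image2_addr_periodic (V Z : set X) u a : subgroup Z -> Z u ->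
  [set v + z | v in V & z in Z] (a + u) <-> [set v + z | v in V & z in Z] a.
Proof.
move=> Zsub Zu; split => -[v Vv [w Zw E]]; exists v => //.
  by exists (w - u); [case: Zsub => _; apply|rewrite addrA E addrK].
by exists (w + u); [exact: subgroupD|rewrite addrA E].
Qed.

Lemma closed_nbhs_separation {I : finType} (f : I -> X -> X) {Z : set X} {p : X} :
  closed Z -> (forall i, continuous (f i)) -> (forall i, ~ Z (f i p)) ->
  exists A V, [/\ open_nbhs p A, open_nbhs 0 V &
    forall i a v, A a -> V v -> ~ Z (f i a - v)].
Proof.
move=> Zcl fcont Zfp.
have near_i i : \forall ab \near (p, 0), ~ Z (f i ab.1 - ab.2).
  have gcont : continuous (fun ab : X * X => f i ab.1 - ab.2).
    apply: continuous_subf => ab; last exact: (@cvg_snd _ _ _ _).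
    exact: (@continuous_comp _ _ _ fst (f i) ab cvg_fst (fcont i _)).
  apply: (gcont (p, 0) (~` Z)); apply: open_nbhs_nbhs.
  by split; [exact: closed_openC|rewrite /= subr0].
have [[A' V'] /= [nA' nV'] AV'] := filter_forall _ near_i.
move: nA' nV'; rewrite !nbhsE => -[A pA AA'] [V V0 VV'].
exists A, V; split => // i a v Aa Vv.
exact: AV' (a, v) (conj (AA' _ Aa) (VV' _ Vv)) i.
Qed.

End TopologicalZmod.

(* [compact_cover] is stated for pointed spaces, which a [topologicalZmodType]
   is not; we point it at 0. *)
Definition pointed_at0 (X : topologicalZmodType) : Type := X.
HB.instance Definition _ (X : topologicalZmodType) := Choice.on (pointed_at0 X).
HB.instance Definition _ (X : topologicalZmodType) :=
  isPointed.Build (pointed_at0 X) (0 : X).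
HB.instance Definition _ (X : topologicalZmodType) :=
  Topological.copy (pointed_at0 X) X.

Lemma compact_cover_compact (X : topologicalZmodType) (K : set X) :
  compact K -> cover_compact K.
Proof.
have : @compact (pointed_at0 X) K -> cover_compact K by rewrite compact_cover.
by apply.
Qed.

Lemma borel_open_measurable {X : topologicalZmodType} {A : set X} :
  open A -> measurable (A : set (borel X)).
Proof. exact: sub_sigma_algebra. Qed.

Lemma borel_closed_measurable {X : topologicalZmodType} {A : set X} :
  closed A -> measurable (A : set (borel X)).
Proof.
move=> cA; rewrite -[A]setCK; apply: measurableC.
by apply: borel_open_measurable; exact: closed_openC.
Qed.

Section HaarMeasure.
Context {R : realType} {X : topologicalZmodType} {Y : set X}.
Context {mu : {measure set (borel X) -> \bar R}}.
Hypotheses (cY : compact Y) (hY : closed_subgroup Y) (haar : haar_of Y mu).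

Lemma haar_setIY (A : set (borel X)) : measurable A -> mu (A `&` Y) = mu A.
Proof.
move=> mA; have [_ mYC _] := haar; have [Ycl _ _] := hY.
have mY := borel_closed_measurable Ycl.
rewrite [RHS](measureDI mu mA mY) [X in (X + _)%E](_ : _ = 0%E) ?add0e //.
apply/eqP; rewrite eq_le measure_ge0 andbT -mYC.
by apply: le_measure; rewrite ?inE //; [exact: measurableD|exact: measurableC].
Qed.

(* The translates of a null open set [O] through [o] would cover the compact
   set [Y] by finitely many null sets. *)
Lemma haar_open_gt0 {O : set X} {o : X} : open O -> O o -> Y o ->
  (0 < mu (O `&` Y))%E.
Proof.
move=> oO Oo Yo; have [mY1 _ mu_addr] := haar; have [Ycl _ YB] := hY.
rewrite haar_setIY; last exact: borel_open_measurable.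
rewrite lt0e measure_ge0 andbT; apply/eqP => mO0.
pose f y := [set a + (y - o) | a in O].
have [D DY YD] : finite_subset_cover Y f Y.
  apply: compact_cover_compact => // [y _|y Yy]; first exact: open_image_addr.
  by exists y => //; exists o => //; rewrite addrC subrK.
have : (mu (Y : set (borel X)) <= _)%E :=
  content_sub_fsum mu (finite_fset D)
  (fun y _ => borel_open_measurable (open_image_addr O (y - o) oO))
  (borel_closed_measurable Ycl) YD.
rewrite mY1 fsbig1 ?lee_fin ?ler10 // => y /DY /set_mem Yy.
rewrite -mO0; apply: mu_addr; last exact: borel_open_measurable.
exact: YB.
Qed.

Context {T : X -> X}.
Hypothesis ergodic : ergodic_on Y T mu.

Lemma ergodic_invariant_open_meets (O A : set X) o p :
  open O -> O o -> Y o -> T @^-1` (O `&` Y) `&` Y = O `&` Y ->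
  open A -> A p -> Y p -> O `&` A `&` Y !=set0.
Proof.
move=> oO Oo Yo Oinv oA Ap Yp; apply/set0P/eqP => OAY0.
have [mY1 _ _] := haar; have [Ycl _ _] := hY.
have mY := borel_closed_measurable Ycl.
have mOY := measurableI _ _ (borel_open_measurable oO) mY.
have mAY := measurableI _ _ (borel_open_measurable oA) mY.
have disj : O `&` Y `&` (A `&` Y) = set0 by rewrite setIACA setIid.
have sum_le1 : (mu (O `&` Y) + mu (A `&` Y) <= 1)%E.
  rewrite -measureU // -mY1; apply: le_measure; rewrite ?inE //.
    exact: measurableU.
  by move=> a [[_ Ya]|[_ Ya]].
have [mO0|mO1] := ergodic.2 _ mOY (@subIsetr _ _ _) Oinv.
  by have := haar_open_gt0 oO Oo Yo; rewrite mO0 ltxx.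
move: sum_le1; rewrite mO1 -[X in (_ <= X)%E]adde0 leeD2lE // leNgt.
by rewrite (haar_open_gt0 oA Ap Yp).
Qed.

End HaarMeasure.

Section IteratedMap.
Context {S : Type} (T : S -> S).

Lemma iter_image {Y : set S} i : T @` Y = Y -> iter i T @` Y = Y.
Proof.
move=> TY; elim: i => [|i IH]; first by rewrite image_id.
by rewrite -[in RHS]TY -[in RHS]IH image_comp.
Qed.

Lemma commuting_image_preimage {phi : S -> S} {Y : set S} :
  injective T -> (forall a, T (phi a) = phi (T a)) -> T @` Y = Y ->
  T @^-1` (phi @` Y) `<=` phi @` Y.
Proof.
move=> Tinj Tphi TY a [b Yb]; have [c Yc <-] : (T @` Y) b by rewrite TY.
by rewrite -Tphi => /Tinj <-; exists c.
Qed.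

Definition orbit_hits n (W : set S) : set S :=
  [set a | exists2 i, (i < n)%N & W (iter i T a)].

Lemma orbit_hits_invariant n (W Y : set S) : (0 < n)%N ->
  (forall a, Y a -> Y (T a)) -> (forall a, Y a -> W (iter n T a) <-> W a) ->
  T @^-1` (orbit_hits n W `&` Y) `&` Y = orbit_hits n W `&` Y.
Proof.
move=> n_gt0 TY Wn; apply/seteqP; split => a.
  case=> -[[i ilt Wi] _] Ya; split => //; move: Wi; rewrite -iterSr => Wi.
  have [ltn|] := ltnP i.+1 n; first by exists i.+1.
  rewrite leq_eqVlt ltnNge ilt orbF => /eqP ei.
  by exists 0%N => //; apply/(Wn a Ya); rewrite ei.
case=> -[i ilt Wi] Ya; split => //; split; last exact: TY.
case: i ilt Wi => [|i] ilt Wi.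
  exists n.-1; first by rewrite prednK.
  by rewrite -iterSr prednK //; apply/(Wn a Ya).
by exists i; [exact: ltnW|rewrite -iterSr].
Qed.

End IteratedMap.

Lemma open_orbit_hits {X : topologicalType} {T : X -> X} {W : set X} :
  continuous T -> open W -> forall n, open (orbit_hits T n W).
Proof.
move=> Tcont oW n; have -> : orbit_hits T n W =
    \bigcup_(i in [set i | (i < n)%N]) (iter i T @^-1` W).
  by apply/seteqP; split => a [i ilt Wi]; exists i.
apply: bigcup_open => i _; move: oW; apply: (continuousP _).1.
exact: continuous_iter Tcont i.
Qed.

Section ErgodicAutomorphism.
Context {R : realType} {X : topologicalZmodType} {T : X -> X} {Y : set X}.
Context {mu : {measure set (borel X) -> \bar R}}.
Hypotheses (hausX : hausdorff_space X) (hT : cont_automorphism T).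
Hypotheses (hY : closed_subgroup Y) (cY : compact Y) (TY : T @` Y = Y).
Hypotheses (haar : haar_of Y mu) (ergodic : ergodic_on Y T mu).

Lemma iter_subr_onto n : (0 < n)%N -> Y `<=` (fun a => iter n T a - a) @` Y.
Proof.
move=> n_gt0 p Yp; apply: contrapT => Zp.
have [TD /bij_inj Tinj Tcont] := hT; have [_ Y0 _] := hY.
have TB := morphD_morphB TD.
set phi := fun a => _ - a in Zp *; set Z := phi @` Y in Zp *.
have phiB : {morph phi : a b / a - b} := subr_id_morphB (iter_morph n TB).
have Zsub : subgroup Z := subgroup_image phiB (closed_subgroupW hY).
have Zcl : closed Z.
  apply: compact_closed hausX _; apply: continuous_compact cY.
  apply: continuous_subspaceT.
  exact: continuous_subf (continuous_iter Tcont n) (fun a => cvg_id).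
have Z_orbit i : ~ Z (iter i T p).
  apply: contra_not Zp; apply: (commuting_image_preimage (iter i T)).
  - by elim: i => [//|i IH] a b /= /Tinj /IH.
  - by move=> a; rewrite /phi (iter_morph i TB) -!iterD addnC.
  - by have := iter_image T i TY.
have [A [V [[oA Ap] [oV V0] AV]]] :=
  closed_nbhs_separation (fun i : 'I_n => iter i T) Zcl
    (fun i => continuous_iter Tcont i) (fun i => Z_orbit i).
pose W := [set v + z | v in V & z in Z].
have W_phi a : Y a -> W (iter n T a) <-> W a.
  move=> Ya; have -> : iter n T a = a + phi a by rewrite addrC subrK.
  by apply: image2_addr_periodic => //; exists a.
have [a [[[i ilt [v Vv [z Zz E]]] Aa] _]] : orbit_hits T n W `&` A `&` Y !=set0.
  apply: (ergodic_invariant_open_meets cY hY haar ergodic) Y0 _ oA Ap Yp.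
  - exact: open_orbit_hits Tcont (open_addr_image2 V Z oV) n.
  - by exists 0%N => //; exists 0 => //; exists 0; [case: Zsub|rewrite addr0].
  - by apply: orbit_hits_invariant => // b Yb; rewrite -TY; exists b.
by apply: (AV (Ordinal ilt) a v Aa Vv); rewrite /= -E addrC addKr.
Qed.

End ErgodicAutomorphism.

Theorem lemma4p8 (R : realType) (X : topologicalZmodType)
  (hcomp : compact [set: X]) (hmetr : metrizable R X)
  (T : X -> X) (hT : cont_automorphism T)
  (Y : set X) (hY : closed_subgroup Y) (hTY : T @` Y = Y)
  (herg : exists mu : {measure set (borel X) -> \bar R},
            haar_of Y mu /\ ergodic_on Y T mu)
  (x : X) (n : nat)
  (hn : iter n T @` [set x + y | y in Y] = [set x + y | y in Y]) :
  exists2 x' : X, [set x + y | y in Y] x' & iter n T x' = x'.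
Proof.
have [mu [haar ergodic]] := herg.
have [Ycl Y0 _] := hY; have [TD _ _] := hT.
case: n hn => [|n] hn; first by exists x => //; exists 0; rewrite ?addr0.
have [y0 Yy0 Sx] : exists2 y0, Y y0 & x + y0 = iter n.+1 T x.
  have : (iter n.+1 T @` [set x + y | y in Y]) (iter n.+1 T x).
    by exists x => //; exists 0; rewrite ?addr0.
  by rewrite hn => -[y0 Yy0 E]; exists y0.
have cY : compact Y := subclosed_compact Ycl hcomp (@subsetT _ Y).
have [y Yy phiy] := iter_subr_onto (metrizable_hausdorff hmetr) hT hY cY hTY
  haar ergodic _ (ltn0Sn n) _ (subgroupN (closed_subgroupW hY) Yy0).
exists (x + y); first by exists y.
move/eqP: phiy; rewrite subr_eq => /eqP Sy.
by rewrite iter_morph // -Sx Sy addrA addrK.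
Qed.
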